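(* Let $M,N\ge1$, $\mathbf y\in\mathbb{R}^M$, $\mathbf H\in\mathbb{R}^{M\times N}$ with $R=\operatorname{rank}(\mathbf H)\ge1$, and $\sigma_e^2>0$, $\sigma_\epsilon^2>0$. Let $\mathbf H=\mathbf U\boldsymbol\Sigma\mathbf V^{\mathrm T}$ be a singular value decomposition ($\mathbf U,\mathbf V$ orthogonal) with nonzero singular values $\lambda_1\ge\cdots\ge\lambda_R>0$ in the first $R$ diagonal positions of $\boldsymbol\Sigma$, let $\boldsymbol\lambda=(\lambda_1,\dots,\lambda_R)^{\mathrm T}$ and $\widetilde{\mathbf y}=\mathbf U^{\mathrm T}\mathbf y$. Let $$f(\mathbf x)=\frac{\|\mathbf y-\mathbf H\mathbf x\|_2^2}{2(\sigma_e^2\|\mathbf x\|_2^2+\sigma_\epsilon^2)}+\frac M2\log(\sigma_e^2\|\mathbf x\|_2^2+\sigma_\epsilon^2),$$ and for $\nu>-\lambda_R^2/(2\sigma_e^2)$ let $$g(\nu)=\sum_{j=1}^{R}\frac{\widetilde y_j^2\,\nu\sigma_e^2}{\lambda_j^2+2\nu\sigma_e^2}+\frac12\|\widetilde{\mathbf y}_{R+1:M}\|_2^2-\frac M2\left(\sum_{j=1}^{R}\frac{\sigma_e^2\widetilde y_j^2\lambda_j^2}{(\lambda_j^2+2\nu\sigma_e^2)^2}+\sigma_\epsilon^2\right)+\nu\sigma_\epsilon^2 .$$ Then the following hold. (A) If $R\le N-1$ and $g(0)\ge0$, then every $\mathbf x=\mathbf V\widetilde{\mathbf x}$ with $\widetilde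 x_j=\widetilde y_j/\lambda_j$ for $j=1,\dots,R$ and $\sum_{i=R+1}^N\widetilde x_i^2=\frac{2g(0)}{M\sigma_e^2}$ is a global minimizer of $f$ on $\mathbb{R}^N$. (B) If $R\le N-1$ and $g(0)<0$, then there exists $\nu^\star\in(0,M/2]$ with $g(\nu^\star)=0$, and for any such $\nu^\star$ the vector $\mathbf x=\mathbf V\widetilde{\mathbf x}$ with $\widetilde x_j=\frac{\widetilde y_j\lambda_j}{\lambda_j^2+2\nu^\star\sigma_e^2}$ for $j=1,\dots,R$ and $\widetilde x_i=0$ for $i=R+1,\dots,N$ is a global minimizer of $f$. (C) If $R=N$, then for any $\nu^\star\in\left(-\frac{\lambda_R^2}{2\sigma_e^2},\frac M2\right]$ with $g(\nu^\star)=0$, the vector $\mathbf x=(\mathbf H^{\mathrm T}\mathbf H+2\nu^\star\sigma_e^2\mathbf I_N)^{-1}\mathbf H^{\mathrm T}\mathbf y$ is a global minimizer of $f$.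
   Context: $\widetilde{\mathbf y}_{R+1:M}=(\widetilde y_{R+1},\dots,\widetilde y_M)^{\mathrm T}$; if $R=M$ it is empty and its squared norm is $0$. The function $f$ is, up to additive constants, the negative log-likelihood of $\mathbf x$ in the model $\mathbf y=(\mathbf H+\mathbf E)\mathbf x+\boldsymbol\epsilon$ with $\mathbf E$ having i.i.d. $\mathcal N(0,\sigma_e^2)$ entries and $\boldsymbol\epsilon\sim\mathcal N(\mathbf 0,\sigma_\epsilon^2\mathbf I_M)$ independent; its global minimizers are the maximum likelihood estimates of $\mathbf x$. *)

From HB Require Import structures.
From mathcomp Require Import all_boot all_order all_algebra.
From mathcomp Require Import reals exp.
Set Implicit Arguments. Unset Strict Implicit. Unset Printing Implicit Defensive.
Import Order.TTheory GRing.Theory Num.Theory.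
Local Open Scope ring_scope.

(* entry k (0-based) of a column vector, 0 if out of range *)
Definition vat (R : realType) (n : nat) (v : 'cV[R]_n) (k : nat) : R :=
  match @insub nat (fun k => k < n)%N 'I_n k with
  | Some i => v i ord0 | None => 0 end.

Definition sqnorm (R : realType) (n : nat) (v : 'cV[R]_n) : R :=
  \sum_(i < n) v i ord0 ^+ 2.

Definition nll (R : realType) (M N : nat) (y : 'cV[R]_M) (H : 'M[R]_(M, N))
  (se2 sep2 : R) (x : 'cV[R]_N) : R :=
  sqnorm (y - H *m x) / (2 * (se2 * sqnorm x + sep2))
  + M%:R / 2 * ln (se2 * sqnorm x + sep2).

(* the function g; lam is 0-indexed: lam 0 >= ... >= lam (r-1) > 0,
   yt = U^T y, components 0..r-1 correspond to j = 1..R of the paper *)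
Definition gfun (R : realType) (M r : nat) (yt : 'cV[R]_M) (lam : nat -> R)
  (se2 sep2 nu : R) : R :=
  \sum_(j < M | (j < r)%N) (yt j ord0 ^+ 2 * nu * se2 / (lam j ^+ 2 + 2 * nu * se2))
  + 1 / 2 * (\sum_(j < M | (r <= j)%N) yt j ord0 ^+ 2)
  - M%:R / 2 * (\sum_(j < M | (j < r)%N)
                  (se2 * yt j ord0 ^+ 2 * lam j ^+ 2 / (lam j ^+ 2 + 2 * nu * se2) ^+ 2)
                + sep2)
  + nu * sep2.

Definition is_global_min (R : realType) (N : nat) (f : 'cV[R]_N -> R) (x : 'cV[R]_N) :=
  forall z : 'cV[R]_N, f x <= f z.

From HB Require Import structures.
From mathcomp Require Import all_boot all_order all_algebra.
From mathcomp Require Import reals exp.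
From mathcomp Require Import lra ring.
From mathcomp Require Import classical_sets topology normedtype.
Set Implicit Arguments. Unset Strict Implicit. Unset Printing Implicit Defensive.
Import Order.TTheory GRing.Theory Num.Theory.
Import numFieldNormedType.Exports.
Local Open Scope ring_scope.

(* In the coordinates w = V^T x, f (V w) = Q w / (2 s w) + M/2 ln (s w), where
   Q w = sum_(k<R) (yt_k - lam_k w_k)^2 + |yt_(R+1:M)|^2 and s w = se2 |w|^2 + sep2.
   Completing the square coordinatewise, Q w + 2 nu se2 |w|^2 attains its minimum m_nu at the
   ridge point w_k = yt_k lam_k / (lam_k^2 + 2 nu se2) (as long as the penalty is nonnegative on
   the kernel of Sigma).  Hence Q w >= K - 2 nu (s w) with K = m_nu + 2 nu sep2, with equality at
   that point, and the equation g nu = 0 (in case (A), the prescribed norm of the kernel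
   component) says precisely that K = M (s w_nu).  Then ln t <= t - 1 with t = s w_nu / s w gives
   f (V w_nu) <= f (V w).  In case (B) a root of g exists by the intermediate value theorem,
   since g (M/2) >= 0. *)

Lemma vatE (R : realType) n (v : 'cV[R]_n) (i : 'I_n) : vat v i = v i ord0.
Proof.
by rewrite /vat (insubT (fun k => k < n)%N (ltn_ord i)) /=; congr (v _ _); apply: val_inj.
Qed.

Lemma vat_big (R : realType) n (v : 'cV[R]_n) (k : nat) :
  \sum_(j < n) (if (j : nat) == k then v j ord0 else 0) = vat v k.
Proof.
case: (ltnP k n) => [lt_kn | le_nk].
  rewrite (bigD1 (Ordinal lt_kn)) //= eqxx big1 ?addr0 -?vatE //.
  by move=> j neq_jk; case: eqP => // eq_jk; case/eqP: neq_jk; apply: val_inj.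
rewrite /vat insubF ?ltnNge ?le_nk // big1 // => j _; case: eqP => // eq_jk.
by move: (ltn_ord j); rewrite eq_jk ltnNge le_nk.
Qed.

Lemma sqnorm_ge0 (R : realType) n (v : 'cV[R]_n) : 0 <= sqnorm v.
Proof. by rewrite sumr_ge0 // => i _; rewrite sqr_ge0. Qed.

Lemma sqnorm_orthomx (R : realType) m n (A : 'M[R]_(m, n)) (v : 'cV[R]_n) :
  A^T *m A = 1%:M -> sqnorm (A *m v) = sqnorm v.
Proof.
have sqnormE (k : nat) (u : 'cV[R]_k) : sqnorm u = (u^T *m u) ord0 ord0.
  by rewrite mxE; apply: eq_bigr => i _; rewrite !mxE expr2.
by move=> orthoA; rewrite !sqnormE trmx_mul mulmxA -(mulmxA _ _ A) orthoA mulmx1.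
Qed.

Definition tailsq (R : realType) n r (v : 'cV[R]_n) : R :=
  \sum_(i < n | (r <= i)%N) v i ord0 ^+ 2.

Lemma tailsq_ge0 (R : realType) n r (v : 'cV[R]_n) : 0 <= tailsq r v.
Proof. by rewrite sumr_ge0 // => i _; rewrite sqr_ge0. Qed.

Lemma tailsq_eq0 (R : realType) n r (v : 'cV[R]_n) : (n <= r)%N -> tailsq r v = 0.
Proof.
move=> le_nr; rewrite /tailsq big_pred0 // => i.
by apply/negbTE; rewrite -ltnNge (leq_trans _ le_nr).
Qed.

Lemma sqnorm_split (R : realType) n r (v : 'cV[R]_n) : (r <= n)%N ->
  sqnorm v = \sum_(k < r) vat v k ^+ 2 + tailsq r v.
Proof.
move=> le_rn; rewrite /sqnorm (bigID (fun i : 'I_n => (i < r)%N)) /=; congr (_ + _).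
  rewrite (big_ord_widen n (fun k => vat v k ^+ 2) le_rn).
  by apply: eq_bigr => i _; rewrite vatE.
by apply: eq_bigl => i; rewrite -leqNgt.
Qed.

Lemma gfunE (R : realType) M r (yt : 'cV[R]_M) (lam : nat -> R) (se2 sep2 nu : R) :
  (r <= M)%N ->
  gfun r yt lam se2 sep2 nu =
    \sum_(k < r) vat yt k ^+ 2 * nu * se2 / (lam k ^+ 2 + 2 * nu * se2)
    + 1 / 2 * tailsq r yt
    - M%:R / 2 * (\sum_(k < r) se2 * vat yt k ^+ 2 * lam k ^+ 2 / (lam k ^+ 2 + 2 * nu * se2) ^+ 2
                  + sep2)
    + nu * sep2.
Proof.
move=> le_rM; rewrite /gfun.
rewrite (big_ord_widen M (fun k => vat yt k ^+ 2 * nu * se2 / (lam k ^+ 2 + 2 * nu * se2)) le_rM).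
rewrite (big_ord_widen M
  (fun k => se2 * vat yt k ^+ 2 * lam k ^+ 2 / (lam k ^+ 2 + 2 * nu * se2) ^+ 2) le_rM).
by congr (_ + _ - _ * (_ + _) + _); apply: eq_bigr => i _; rewrite vatE.
Qed.

Section RealInequalities.
Variable R : realType.

Lemma ridge_term_ge (a l b c : R) : 0 < l ^+ 2 + c ->
  a ^+ 2 * c / (l ^+ 2 + c) <= (a - l * b) ^+ 2 + c * b ^+ 2.
Proof.
move=> d_gt0; rewrite -subr_ge0.
have -> : (a - l * b) ^+ 2 + c * b ^+ 2 - a ^+ 2 * c / (l ^+ 2 + c)
    = ((l ^+ 2 + c) * b - a * l) ^+ 2 / (l ^+ 2 + c) by field; rewrite gt_eqF.
by rewrite divr_ge0 ?sqr_ge0 ?ltW.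
Qed.

Lemma ridge_term_min (a l c : R) : 0 < l ^+ 2 + c ->
  (a - l * (a * l / (l ^+ 2 + c))) ^+ 2 + c * (a * l / (l ^+ 2 + c)) ^+ 2
  = a ^+ 2 * c / (l ^+ 2 + c).
Proof. by move=> d_gt0; field; rewrite gt_eqF. Qed.

(* ln t <= t - 1 with t = s0 / s *)
Lemma quot_ln_le (m nu s0 s q0 q : R) : 0 < m -> 0 < s0 -> 0 < s ->
  m * s0 - 2 * nu * s <= q -> q0 = m * s0 - 2 * nu * s0 ->
  q0 / (2 * s0) + m / 2 * ln s0 <= q / (2 * s) + m / 2 * ln s.
Proof.
move=> m_gt0 s0_gt0 s_gt0 q_ge ->.
have h1 : (m * s0 - 2 * nu * s) / (2 * s) <= q / (2 * s).
  by rewrite ler_pM2r // invr_gt0 mulr_gt0.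
apply: le_trans (lerD h1 (lexx _)).
have ln_le : ln s0 - ln s <= s0 / s - 1.
  rewrite -ln_div ?posrE //.
  have := @le_ln1Dx R (s0 / s - 1).
  by rewrite subrKC; apply; rewrite ltrBrDl addrN divr_gt0.
have e1 : (m * s0 - 2 * nu * s0) / (2 * s0) = m / 2 - nu by field; rewrite gt_eqF.
have e2 : (m * s0 - 2 * nu * s) / (2 * s) = m / 2 * (s0 / s) - nu by field; rewrite gt_eqF.
rewrite e1 e2.
have : m / 2 * (ln s0 - ln s) <= m / 2 * (s0 / s - 1) by rewrite ler_pM2l ?divr_gt0.
lra.
Qed.

Lemma ridge_denom_gt0 r (lam : nat -> R) (se2 nu : R) : (0 < r)%N -> 0 < se2 ->
  (forall j k : nat, (j <= k)%N -> (k < r)%N -> lam k <= lam j) ->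
  (forall j : nat, (j < r)%N -> 0 < lam j) ->
  - (lam r.-1 ^+ 2) / (2 * se2) < nu ->
  forall k, (k < r)%N -> 0 < lam k ^+ 2 + 2 * nu * se2.
Proof.
move=> r_gt0 se2_gt0 lam_antitone lam_gt0 nu_gt k lt_kr.
have lt_last : (r.-1 < r)%N by rewrite prednK.
have lam_le : lam r.-1 <= lam k by apply: lam_antitone; rewrite // -ltnS prednK.
have sqr_le : lam r.-1 ^+ 2 <= lam k ^+ 2.
  by rewrite ler_pXn2r // nnegrE ltW // (lt_le_trans (lam_gt0 _ lt_last)).
have : - lam r.-1 ^+ 2 < nu * (2 * se2) by rewrite -ltr_pdivrMr ?mulr_gt0.
lra.
Qed.

End RealInequalities.

Section RootOfG.
Variables (R : realType) (M r : nat) (yt : 'cV[R]_M) (lam : nat -> R) (se2 sep2 : R).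
Hypothesis se2_gt0 : 0 < se2.

Let g := gfun r yt lam se2 sep2.

Lemma gfun_half_M_ge0 : (0 < M)%N -> 0 <= g (M%:R / 2).
Proof.
move=> M_gt0; set m := M%:R / 2.
have m_gt0 : 0 < m by rewrite divr_gt0 ?ltr0n.
have c_gt0 : 0 < 2 * m * se2 by rewrite mulr_gt0 // mulr_gt0.
have gE : g m = \sum_(j < M | (j < r)%N)
    (yt j ord0 ^+ 2 * m * se2 / (lam j ^+ 2 + 2 * m * se2)
     - m * (se2 * yt j ord0 ^+ 2 * lam j ^+ 2 / (lam j ^+ 2 + 2 * m * se2) ^+ 2))
    + 1 / 2 * (\sum_(j < M | (r <= j)%N) yt j ord0 ^+ 2).
  by rewrite /g /gfun sumrB -mulr_sumr /m; ring.
rewrite gE addr_ge0 //; last by apply: mulr_ge0; [lra | exact: tailsq_ge0].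
apply: sumr_ge0 => j _.
have d_gt0 : 0 < lam j ^+ 2 + 2 * m * se2 by rewrite ltr_wpDl ?sqr_ge0.
have -> : yt j ord0 ^+ 2 * m * se2 / (lam j ^+ 2 + 2 * m * se2)
    - m * (se2 * yt j ord0 ^+ 2 * lam j ^+ 2 / (lam j ^+ 2 + 2 * m * se2) ^+ 2)
    = yt j ord0 ^+ 2 * m * se2 * (2 * m * se2) / (lam j ^+ 2 + 2 * m * se2) ^+ 2.
  by field; rewrite gt_eqF.
rewrite divr_ge0 ?exprn_ge0 ?(ltW d_gt0) //.
have yt2_ge0 : 0 <= yt j ord0 ^+ 2 * m * se2.
  exact: mulr_ge0 (mulr_ge0 (sqr_ge0 _) (ltW m_gt0)) (ltW se2_gt0).
by rewrite mulr_ge0 ?(ltW c_gt0).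
Qed.

Lemma gfun_continuous nu : (forall j, (j < r)%N -> lam j ^+ 2 + 2 * nu * se2 != 0) ->
  {for nu, continuous g}.
Proof.
move=> d_neq0.
have scale_cont (a b : R) : {for nu, continuous (fun t : R => a * t * b)}.
  apply: continuousM; last exact: cst_continuous.
  by apply: continuousM; [exact: cst_continuous | exact: cvg_id].
have d_cont j : {for nu, continuous (fun t : R => lam j ^+ 2 + 2 * t * se2)}.
  by apply: continuousD; [exact: cst_continuous | exact: scale_cont].
have sum_cont (F : 'I_M -> R -> R) :
    (forall j : 'I_M, (j < r)%N -> {for nu, continuous (F j)}) ->
    {for nu, continuous (fun t => \sum_(j < M | (j < r)%N) F j t)}.
  by move=> F_cont; apply: cvg_big; [exact: add_continuous | exact: F_cont].
rewrite /g /gfun; apply: continuousD; last first.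
  by apply: continuousM; [exact: cvg_id | exact: cst_continuous].
apply: continuousB.
  apply: continuousD; last exact: cst_continuous.
  apply: sum_cont => j lt_jr; apply: continuousM; first exact: scale_cont.
  by apply: continuousV; [exact: d_neq0 | exact: d_cont].
apply: continuousM; first exact: cst_continuous.
apply: continuousD; last exact: cst_continuous.
apply: sum_cont => j lt_jr; apply: continuousM; first exact: cst_continuous.
apply: continuousV; first by rewrite sqrf_eq0 d_neq0.
by apply: continuousM; exact: d_cont.
Qed.

Lemma gfun_root_exists : (0 < M)%N -> (forall j, (j < r)%N -> lam j != 0) -> g 0 < 0 ->
  exists nu, 0 < nu /\ nu <= M%:R / 2 /\ g nu = 0.
Proof.
move=> M_gt0 lam_neq0 g0_lt0.
have half_M_ge0 : 0 <= M%:R / 2 :> R by rewrite divr_ge0 ?ler0n.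
have [nu] : exists2 nu, nu \in `[0, M%:R / 2] & g nu = 0.
  apply: IVT => //; last by rewrite ge_min ltW //= le_max gfun_half_M_ge0 ?orbT.
  apply: continuous_in_subspaceT => nu; rewrite inE /= in_itv /= => /andP [nu_ge0 _].
  apply: gfun_continuous => j lt_jr.
  have lam2_gt0 : 0 < lam j ^+ 2 by rewrite exprn_even_gt0 ?lam_neq0.
  have nu_se2_ge0 : 0 <= 2 * nu * se2 by rewrite mulr_ge0 ?mulr_ge0 ?(ltW se2_gt0).
  by rewrite gt_eqF //; lra.
rewrite in_itv /= => /andP [nu_ge0 nu_le] g_nu; exists nu; split => //.
rewrite lt_neqAle nu_ge0 andbT eq_sym; apply: contraTneq g0_lt0 => nu0.
by move: g_nu; rewrite nu0 => ->; rewrite ltxx.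
Qed.

End RootOfG.

Section SvdCoordinates.
Variables (R : realType) (M N r : nat) (y : 'cV[R]_M) (H : 'M[R]_(M, N)) (se2 sep2 : R).
Variables (U : 'M[R]_M) (V : 'M[R]_N) (Sigma : 'M[R]_(M, N)) (lam : nat -> R).
Hypotheses (r_le_M : (r <= M)%N) (r_le_N : (r <= N)%N).
Hypotheses (U_orth : U^T *m U = 1%:M) (V_orth : V^T *m V = 1%:M).
Hypothesis Sigma_diag : forall (i : 'I_M) (j : 'I_N),
  Sigma i j = if ((i : nat) == j) && (i < r)%N then lam i else 0.
Hypothesis H_svd : H = U *m Sigma *m V^T.

Let yt := U^T *m y.

Lemma Sigma_mul (w : 'cV[R]_N) (i : 'I_M) :
  (Sigma *m w) i ord0 = if (i < r)%N then lam i * vat w i else 0.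
Proof.
rewrite mxE; case: ifP => lt_ir.
  rewrite -vat_big mulr_sumr; apply: eq_bigr => j _.
  by rewrite Sigma_diag lt_ir andbT eq_sym; case: eqP => _; rewrite ?mulr0 ?mul0r.
by apply: big1 => j _; rewrite Sigma_diag lt_ir andbF mul0r.
Qed.

Lemma trmx_Sigma_mul (v : 'cV[R]_M) (j : 'I_N) :
  (Sigma^T *m v) j ord0 = if (j < r)%N then lam j * vat v j else 0.
Proof.
rewrite mxE; case: ifP => lt_jr.
  rewrite -vat_big mulr_sumr; apply: eq_bigr => i _.
  by rewrite mxE Sigma_diag; case: eqP => [->|_]; rewrite ?lt_jr ?mul0r ?mulr0.
by apply: big1 => i _; rewrite mxE Sigma_diag; case: eqP => [->|_]; rewrite ?lt_jr ?mul0r.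
Qed.

Definition resid (w : 'cV[R]_N) : R :=
  \sum_(k < r) (vat yt k - lam k * vat w k) ^+ 2 + tailsq r yt.

Lemma sqnorm_resid (w : 'cV[R]_N) : sqnorm (y - H *m (V *m w)) = resid w.
Proof.
have -> : y - H *m (V *m w) = U *m (yt - Sigma *m w).
  have U_orthC : U *m U^T = 1%:M by apply: mulmx1C.
  by rewrite H_svd mulmxBr /yt !mulmxA U_orthC mul1mx -(mulmxA _ V^T) V_orth mulmx1.
have entryB (i : 'I_M) : (yt - Sigma *m w) i ord0 = yt i ord0 - (Sigma *m w) i ord0.
  by rewrite !mxE.
rewrite sqnorm_orthomx // /sqnorm (bigID (fun i : 'I_M => (i < r)%N)) /=.
congr (_ + _).
  rewrite (big_ord_widen M (fun k => (vat yt k - lam k * vat w k) ^+ 2) r_le_M).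
  by apply: eq_bigr => i lt_ir; rewrite entryB Sigma_mul lt_ir vatE.
apply: eq_big => [i|i ge_ir]; first by rewrite -leqNgt.
by rewrite entryB Sigma_mul ifN ?subr0 // -leqNgt.
Qed.

Lemma trmx_Sigma_Sigma : r = N -> Sigma^T *m Sigma = diag_mx (\row_(j < N) lam j ^+ 2).
Proof.
move=> r_eq_N; apply/matrixP => i j.
have lt_iM : (i < M)%N by rewrite (leq_trans _ r_le_M) // r_eq_N.
have -> : (Sigma^T *m Sigma) i j = col j (Sigma^T *m Sigma) i ord0 by rewrite [RHS]mxE.
rewrite colE -mulmxA -colE trmx_Sigma_mul.
rewrite r_eq_N ltn_ord -[nat_of_ord i]/(nat_of_ord (Ordinal lt_iM)) vatE !mxE Sigma_diag /=.
rewrite r_eq_N ltn_ord andbT.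
case: (eqVneq i j) => [->| neq_ij]; first by rewrite eqxx mulr1n expr2.
by rewrite ifN // mulr0; case: eqP neq_ij => // ->; rewrite eqxx.
Qed.

Hypotheses (M_gt0 : (0 < M)%N) (se2_gt0 : 0 < se2) (sep2_gt0 : 0 < sep2).

Lemma nll_rotate (w : 'cV[R]_N) :
  nll y H se2 sep2 (V *m w)
  = resid w / (2 * (se2 * sqnorm w + sep2)) + M%:R / 2 * ln (se2 * sqnorm w + sep2).
Proof. by rewrite /nll sqnorm_resid sqnorm_orthomx. Qed.

Section Ridge.
Variable nu : R.
Hypothesis denom_gt0 : forall k, (k < r)%N -> 0 < lam k ^+ 2 + 2 * nu * se2.

Definition ridge_min : R :=
  \sum_(k < r) vat yt k ^+ 2 * (2 * nu * se2) / (lam k ^+ 2 + 2 * nu * se2) + tailsq r yt.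

Definition ridge_coords : 'cV[R]_N :=
  \col_(i < N) (if (i < r)%N then vat yt i * lam i / (lam i ^+ 2 + 2 * nu * se2) else 0).

Lemma vat_ridge_coords k : (k < r)%N ->
  vat ridge_coords k = vat yt k * lam k / (lam k ^+ 2 + 2 * nu * se2).
Proof.
move=> lt_kr; have lt_kN : (k < N)%N := leq_trans lt_kr r_le_N.
by rewrite -[k]/(nat_of_ord (Ordinal lt_kN)) vatE mxE /= lt_kr.
Qed.

Lemma tailsq_ridge_coords : tailsq r ridge_coords = 0.
Proof. by rewrite /tailsq big1 // => i ge_ir; rewrite mxE ifN ?expr0n // -leqNgt. Qed.

Lemma resid_ridgeE (w : 'cV[R]_N) :
  resid w + 2 * nu * se2 * sqnorm w
  = \sum_(k < r) ((vat yt k - lam k * vat w k) ^+ 2 + 2 * nu * se2 * vat w k ^+ 2)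
    + tailsq r yt + 2 * nu * se2 * tailsq r w.
Proof. by rewrite (sqnorm_split w r_le_N) /resid big_split /= mulrDr mulr_sumr; ring. Qed.

Lemma resid_ridge_ge (w : 'cV[R]_N) : 0 <= nu * tailsq r w ->
  ridge_min <= resid w + 2 * nu * se2 * sqnorm w.
Proof.
move=> tail_ge0; rewrite resid_ridgeE -addrA lerD //.
  by apply: ler_sum => k lt_kr; apply: ridge_term_ge; apply: denom_gt0.
have := mulr_ge0 tail_ge0 (ltW se2_gt0).
by rewrite lerDl; nra.
Qed.

Lemma resid_ridge_eq (ws : 'cV[R]_N) :
  (forall k, (k < r)%N -> vat ws k = vat yt k * lam k / (lam k ^+ 2 + 2 * nu * se2)) ->
  nu * tailsq r ws = 0 ->
  resid ws + 2 * nu * se2 * sqnorm ws = ridge_min.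
Proof.
move=> wsE tail0; rewrite resid_ridgeE.
have -> : 2 * nu * se2 * tailsq r ws = 2 * se2 * (nu * tailsq r ws) by ring.
rewrite tail0 mulr0 addr0; congr (_ + _).
by apply: eq_bigr => k _; rewrite wsE // ridge_term_min // denom_gt0.
Qed.

Lemma ridge_scale_eq (ws : 'cV[R]_N) :
  (forall k, (k < r)%N -> vat ws k = vat yt k * lam k / (lam k ^+ 2 + 2 * nu * se2)) ->
  M%:R * se2 * tailsq r ws = 2 * gfun r yt lam se2 sep2 nu ->
  M%:R * (se2 * sqnorm ws + sep2) = ridge_min + 2 * nu * sep2.
Proof.
move=> wsE; rewrite gfunE // (sqnorm_split ws r_le_N) /ridge_min => tail_g.
have head_eq : se2 * \sum_(k < r) vat ws k ^+ 2
    = \sum_(k < r) se2 * vat yt k ^+ 2 * lam k ^+ 2 / (lam k ^+ 2 + 2 * nu * se2) ^+ 2.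
  rewrite mulr_sumr; apply: eq_bigr => k lt_kr; rewrite wsE //.
  by field; rewrite gt_eqF ?denom_gt0.
have ridge_eq : \sum_(k < r) vat yt k ^+ 2 * (2 * nu * se2) / (lam k ^+ 2 + 2 * nu * se2)
    = 2 * \sum_(k < r) vat yt k ^+ 2 * nu * se2 / (lam k ^+ 2 + 2 * nu * se2).
  rewrite mulr_sumr; apply: eq_bigr => k lt_kr.
  by field; rewrite gt_eqF ?denom_gt0.
by rewrite ridge_eq mulrDr mulrDr head_eq mulrDr mulrA tail_g; field.
Qed.

Lemma nll_min_ridge (ws : 'cV[R]_N) : (0 <= nu \/ r = N) ->
  (forall k, (k < r)%N -> vat ws k = vat yt k * lam k / (lam k ^+ 2 + 2 * nu * se2)) ->
  nu * tailsq r ws = 0 ->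
  M%:R * se2 * tailsq r ws = 2 * gfun r yt lam se2 sep2 nu ->
  is_global_min (nll y H se2 sep2) (V *m ws).
Proof.
move=> penalty_ge0 wsE tail0 tail_g z.
have V_orthC : V *m V^T = 1%:M by apply: mulmx1C.
rewrite -[z]mul1mx -V_orthC -mulmxA !nll_rotate; set w := V^T *m z.
have tail_ge0 : 0 <= nu * tailsq r w.
  case: penalty_ge0 => [nu_ge0 | r_eq_N]; first by rewrite mulr_ge0 ?tailsq_ge0.
  by rewrite tailsq_eq0 ?mulr0 // r_eq_N.
have s_gt0 (u : 'cV[R]_N) : 0 < se2 * sqnorm u + sep2.
  by rewrite ltr_wpDl ?mulr_ge0 ?sqnorm_ge0 ?(ltW se2_gt0).
have w_ge := resid_ridge_ge tail_ge0.
have ws_eq := resid_ridge_eq wsE tail0.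
have scale_eq := ridge_scale_eq wsE tail_g.
by apply: (quot_ln_le (nu := nu)); rewrite ?ltr0n //; lra.
Qed.

Lemma ridge_solution : r = N ->
  invmx (H^T *m H + (2 * nu * se2)%:M) *m (H^T *m y) = V *m ridge_coords.
Proof.
move=> r_eq_N.
have V_orthC : V *m V^T = 1%:M by apply: mulmx1C.
set D := diag_mx (\row_(j < N) (lam j ^+ 2 + 2 * nu * se2)).
have A_eq : H^T *m H + (2 * nu * se2)%:M = V *m D *m V^T.
  have -> : D = Sigma^T *m Sigma + (2 * nu * se2)%:M.
    rewrite trmx_Sigma_Sigma // -diag_const_mx -raddfD /=.
    by congr diag_mx; apply/rowP => j; rewrite !mxE.
  rewrite H_svd !trmx_mul trmxK mulmxDr mulmxDl mul_mx_scalar -scalemxAl V_orthC scalemx1.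
  by rewrite !mulmxA -(mulmxA _ U^T U) U_orth mulmx1.
have D_unit : D \in unitmx.
  rewrite unitmxE det_diag unitfE; apply/prodf_neq0 => j _.
  by rewrite mxE gt_eqF // denom_gt0 // r_eq_N.
have [Vt_unit V_unit] := mulmx1_unit V_orth.
have D_coords : D *m ridge_coords = Sigma^T *m yt.
  apply/colP => j; rewrite mul_diag_mx mxE trmx_Sigma_mul !mxE r_eq_N ltn_ord.
  by field; rewrite gt_eqF // denom_gt0 // r_eq_N.
have -> : H^T *m y = (H^T *m H + (2 * nu * se2)%:M) *m (V *m ridge_coords).
  by rewrite A_eq -!mulmxA (mulmxA V^T) V_orth mul1mx D_coords H_svd !trmx_mul trmxK !mulmxA.
by rewrite mulKmx // A_eq !unitmx_mul V_unit D_unit Vt_unit.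
Qed.

End Ridge.
End SvdCoordinates.

Theorem mainTheorem4 (R : realType) (M N r : nat)
  (y : 'cV[R]_M) (H : 'M[R]_(M, N)) (se2 sep2 : R)
  (U : 'M[R]_M) (V : 'M[R]_N) (Sigma : 'M[R]_(M, N)) (lam : nat -> R) :
  (1 <= M)%N -> (1 <= N)%N ->
  \rank H = r -> (1 <= r)%N ->
  0 < se2 -> 0 < sep2 ->
  U^T *m U = 1%:M -> V^T *m V = 1%:M ->
  (forall (i : 'I_M) (j : 'I_N),
      Sigma i j = if ((i : nat) == j) && (i < r)%N then lam i else 0) ->
  (forall j k : nat, (j <= k)%N -> (k < r)%N -> lam k <= lam j) ->
  (forall j : nat, (j < r)%N -> 0 < lam j) ->
  H = U *m Sigma *m V^T ->
  let yt := U^T *m y in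
  let f := nll y H se2 sep2 in
  let g := gfun r yt lam se2 sep2 in
  (* (A) *)
  ((r < N)%N -> 0 <= g 0 ->
    forall xt : 'cV[R]_N,
      (forall j : 'I_N, (j < r)%N -> xt j ord0 = vat yt j / lam j) ->
      \sum_(i < N | (r <= i)%N) xt i ord0 ^+ 2 = 2 * g 0 / (M%:R * se2) ->
      is_global_min f (V *m xt))
  /\
  (* (B) *)
  ((r < N)%N -> g 0 < 0 ->
    (exists nu, 0 < nu /\ nu <= M%:R / 2 /\ g nu = 0) /\
    (forall nu, 0 < nu -> nu <= M%:R / 2 -> g nu = 0 ->
       is_global_min f
         (V *m \col_(i < N)
            (if (i < r)%N then vat yt i * lam i / (lam i ^+ 2 + 2 * nu * se2) else 0))))
  /\
  (* (C) *)
  (r = N ->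
    forall nu, - (lam r.-1 ^+ 2) / (2 * se2) < nu -> nu <= M%:R / 2 -> g nu = 0 ->
      is_global_min f (invmx (H^T *m H + (2 * nu * se2)%:M) *m (H^T *m y))).
Proof.
move=> M_gt0 _ rank_H r_gt0 se2_gt0 sep2_gt0 U_orth V_orth Sigma_diag lam_antitone lam_gt0 H_svd
  yt f g.
have r_le_M : (r <= M)%N by rewrite -rank_H rank_leq_row.
have r_le_N : (r <= N)%N by rewrite -rank_H rank_leq_col.
have nll_min := nll_min_ridge r_le_M r_le_N U_orth V_orth Sigma_diag H_svd M_gt0 se2_gt0 sep2_gt0.
have denom_gt0 := ridge_denom_gt0 r_gt0 se2_gt0 lam_antitone lam_gt0.
have denom_ge0_gt0 nu : 0 <= nu -> forall k, (k < r)%N -> 0 < lam k ^+ 2 + 2 * nu * se2.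
  move=> nu_ge0; apply: denom_gt0; apply: lt_le_trans nu_ge0.
  by rewrite mulNr oppr_lt0 divr_gt0 ?mulr_gt0 ?exprn_gt0 ?lam_gt0 // prednK.
split; [|split].
- move=> _ _ xt xtE xt_tail; apply: nll_min (denom_ge0_gt0 0 (lexx 0)) _ _ _ _ _.
  + by left.
  + move=> k lt_kr; have lt_kN := leq_trans lt_kr r_le_N.
    rewrite -[k]/(nat_of_ord (Ordinal lt_kN)) vatE xtE //= mulr0 mul0r addr0.
    by field; rewrite gt_eqF ?lam_gt0.
  + by rewrite mul0r.
  + by rewrite /tailsq xt_tail /g; field; rewrite gt_eqF // pnatr_eq0 -lt0n.
- move=> _ g0_lt0; split.
    by apply: gfun_root_exists => // j lt_jr; rewrite gt_eqF ?lam_gt0.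
  move=> nu nu_gt0 _ g_nu; have denom_nu_gt0 := denom_ge0_gt0 nu (ltW nu_gt0).
  apply: nll_min denom_nu_gt0 _ _ _ _ _; first by left; exact: ltW.
  + exact: vat_ridge_coords.
  + by rewrite tailsq_ridge_coords mulr0.
  + by move: g_nu; rewrite /g => ->; rewrite tailsq_ridge_coords !mulr0.
- move=> r_eq_N nu nu_gt _ g_nu; have denom_nu_gt0 := denom_gt0 nu nu_gt.
  rewrite (ridge_solution y r_le_M U_orth V_orth Sigma_diag H_svd denom_nu_gt0 r_eq_N).
  apply: nll_min denom_nu_gt0 _ _ _ _ _; first by right.
  + exact: vat_ridge_coords.
  + by rewrite tailsq_ridge_coords mulr0.
  + by move: g_nu; rewrite /g => ->; rewrite tailsq_ridge_coords !mulr0.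
Qed.
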